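(* Let $F$ be the fractal percolation in $[0,1]^2$ with parameters $M\in\mathbb{N}_{\geq2}$ and $p\in[0,1]$, $D=\log(M^2p)/\log M$, $r=1/M$, let $J_1,J_4$ be two level-1 squares sharing a common side, and for $k\in\{0,1\}$ let $$E_1:=2M(M-1)\sum_{n=1}^\infty r^{n(D-k)}\mathbb{E}V_k(C_n^1\cap C_n^4).$$ If $p>1/M^2$, then for $k=0$, $$E_1=\frac{2M(M-1)}{M-p}\left(\frac{2(1-p)}{M-1}+\frac{2(M-1)p}{M^2-p}-\frac{p(1-p^2)}{M-p^2}\right)-\frac{2M(M-1)^2p^3}{(M-p^2)(M^2-p^3)}+\frac{2M(M-1)}{M^2p-1}-\frac{8M}{M+1}+\frac{4M(M-1)p}{M^2-p}.$$ If $p>1/M$, then for $k=1$, $E_1=2(M-1)\left(\frac{1}{Mp-1}-\frac{2}{M-1}+\frac{p}{M-p}\right)$.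
   Context: Fractal percolation in $[0,1]^2$: $F_0=[0,1]^2$; given $F_{n-1}$, a union of closed grid squares of side $M^{-(n-1)}$, each is divided into $M^2$ closed subsquares of side $M^{-n}$, each kept independently (of everything else) with probability $p$; $F_n$ is the union of kept subsquares. The level-1 squares are the $M^2$ closed subsquares of $[0,1]^2$ of side $1/M$. For a level-1 square $J_j$, $C_n^j$ is the union of those level-$n$ grid squares contained in $J_j$ that do not belong to $F_n$. $V_0$ is the Euler characteristic and $V_1$ the first intrinsic volume (length, for subsets of a segment). *)

From HB Require Import structures.
From mathcomp Require Import all_boot all_order all_algebra.
From mathcomp Require Import all_classical all_reals all_analysis.
Set Implicit Arguments. Unset Strict Implicit. Unset Printing Implicit Defensive.
Import Order.TTheory GRing.Theory Num.Theory.
Local Open Scope ring_scope.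

(* A level-n grid square is indexed by (a,b) with a,b < M^n: it is         *)
(*   [a/M^n,(a+1)/M^n] x [b/M^n,(b+1)/M^n].                                *)
Definition sq (M n : nat) := ('I_(M ^ n) * 'I_(M ^ n))%type.

(* Coin-flip nodes used to build F_1,...,F_n: a node (m,(a,b)) with        *)
(* m : 'I_n is the level-(m+1) square with coordinates (a,b)               *)
(* (only meaningful when a,b < M^(m+1); the remaining coins are unused,    *)
(* independent, and do not affect the law of (F_1,...,F_n)).               *)
Definition node (M n : nat) := ('I_n * sq M n)%type.
Definition config (M n : nat) := {ffun node M n -> bool}.

(* coordinate of the level-(m+1) ancestor of a level-n coordinate a *)
Definition anc (M n : nat) (m : 'I_n) (a : 'I_(M ^ n)) : 'I_(M ^ n) :=
  Ordinal (leq_ltn_trans (leq_div a (M ^ (n - m.+1))) (ltn_ord a)).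

(* the level-n square s belongs to F_n: it and all its ancestors of levels *)
(* 1..n were kept *)
Definition kept (M n : nat) (w : config M n) (s : sq M n) : bool :=
  [forall m : 'I_n, w (m, (anc m s.1, anc m s.2))].

Definition in_level1 (M n : nat) (j : 'I_M * 'I_M) (s : sq M n) : bool :=
  ((s.1 %/ M ^ n.-1)%N == j.1) && ((s.2 %/ M ^ n.-1)%N == j.2).

(* the squares whose union is C_n^j *)
Definition removed_in (M n : nat) (w : config M n) (j : 'I_M * 'I_M)
  (s : sq M n) : bool := in_level1 j s && ~~ kept w s.

Definition weight (R : realType) (M n : nat) (p : R) (w : config M n) : R :=
  \prod_(t : node M n) (if w t then p else 1 - p).

(* Cells of the level-n grid cell complex of [0,1]^2, in doubled          *)
(* coordinates (i,j), 0 <= i,j <= 2 M^n: (even,even) = vertex             *)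
(* (i/2,j/2)/M^n, (odd,even) / (even,odd) = closed edges, (odd,odd) =      *)
(* closed square. A closed cell c lies in the closed square s iff          *)
(* 2 s.1 <= c.1 <= 2 s.1 + 2 and likewise for the second coordinate.       *)
Definition cell (M n : nat) := ('I_(2 * M ^ n).+1 * 'I_(2 * M ^ n).+1)%type.

Definition cell_in_sq (M n : nat) (c : cell M n) (s : sq M n) : bool :=
  [&& (2 * s.1 <= c.1)%N, (c.1 <= 2 * s.1 + 2)%N,
      (2 * s.2 <= c.2)%N & (c.2 <= 2 * s.2 + 2)%N].

Definition cell_dim (M n : nat) (c : cell M n) : nat := (odd c.1 + odd c.2)%N.

Definition cell_in_C (M n : nat) (w : config M n) (j : 'I_M * 'I_M)
  (c : cell M n) : bool := [exists s, removed_in w j s && cell_in_sq c s].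

(* A subcomplex X of the level-n grid (given by its set of closed cells)   *)
(* and its intrinsic volumes, computed by additivity over the relatively   *)
(* open cells:  V_0 = sum (-1)^dim,                                        *)
(* V_1 = h * #edges - 2 h * #squares, h = M^-n the mesh.                   *)
Definition V0 (R : realType) (M n : nat) (X : pred (cell M n)) : R :=
  \sum_(c : cell M n | X c) (-1) ^+ cell_dim c.

Definition V1 (R : realType) (M n : nat) (X : pred (cell M n)) : R :=
  \sum_(c : cell M n | X c)
     (if cell_dim c == 1%N then (M%:R ^+ n)^-1
      else if cell_dim c == 2%N then - 2 * (M%:R ^+ n)^-1 else 0).

Definition Vk (R : realType) (k M n : nat) (X : pred (cell M n)) : R :=
  if k == 0%N then V0 R X else V1 R X.

Definition Cint (M n : nat) (w : config M n) (j1 j4 : 'I_M * 'I_M) :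
  pred (cell M n) := fun c => cell_in_C w j1 c && cell_in_C w j4 c.

Definition EVk (R : realType) (k M n : nat) (p : R) (j1 j4 : 'I_M * 'I_M) : R :=
  \sum_(w : config M n) weight p w * Vk R k (Cint w j1 j4).

Definition adjacent_sides (M : nat) (j1 j4 : 'I_M * 'I_M) : bool :=
  ((j1.1 == j4.1) && (((j1.2).+1 == j4.2)%N || ((j4.2).+1 == j1.2)%N)) ||
  ((j1.2 == j4.2) && (((j1.1).+1 == j4.1)%N || ((j4.1).+1 == j1.1)%N)).

Definition dimD (R : realType) (M : nat) (p : R) : R :=
  ln (M%:R ^+ 2 * p) / ln M%:R.

Definition E1_partial (R : realType) (k M : nat) (p : R) (j1 j4 : 'I_M * 'I_M)
  (N : nat) : R :=
  2 * M%:R * (M%:R - 1) *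
  \sum_(1 <= n < N) ((M%:R^-1) `^ (n%:R * (dimD M p - k%:R)) * @EVk R k M n p j1 j4).

From HB Require Import structures.
From mathcomp Require Import all_boot all_order all_algebra.
From mathcomp Require Import all_classical all_reals all_analysis.
From mathcomp Require Import ring lra zify.
Import Order.TTheory GRing.Theory Num.Theory numFieldNormedType.Exports.
Set Implicit Arguments. Unset Strict Implicit. Unset Printing Implicit Defensive.
Local Open Scope ring_scope.

(* E V_k is additive over the relatively open cells of the level-n grid, so
   E V_k(C_n^1 \cap C_n^4) is the sum over cells c of the contribution of c
   times the probability that c lies in both C_n^1 and C_n^4.  A closed cell
   lies in C_n^j unless every coin on the ancestry of the level-n squares of
   J_j containing it came up "kept"; for j = 1, 4 these sets of coins are
   disjoint, so the probability is (1 - p^a)(1 - p^b), a and b being their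
   sizes.  Only cells of the common side of J_1 and J_4 contribute.  Its edges
   and end vertices meet one square on each side, i.e. n coins; the vertex at
   distance i M^-n from the corner meets two squares whose ancestors differ
   exactly at the levels whose grid lines pass through it, i.e.
   n + #{e < n | M^e divides i} coins.  Summing over i turns E V_k into a
   combination of n-th powers of p, p^2, M p and M p^2, so that
   r^(n(D-k)) E V_k is a combination of geometric sequences of ratio < 1, whose
   series sum to the stated rational functions.  By symmetry J_4 may be assumed
   to lie directly above J_1. *)

(** * Independent coins *)

Section IndependentCoins.
Variables (R : comPzRingType) (T : finType) (p : R).

Lemma expect_forall_coins (S : {set T}) :
  \sum_(w : {ffun T -> bool}) (\prod_t (if w t then p else 1 - p)) *
    [forall t in S, w t]%:R = p ^+ #|S|.
Proof.
have indicator w : [forall t in S, w t]%:R = \prod_t (if t \in S then (w t)%:R else 1) :> R.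
  case: (boolP [forall t in S, w t]) => [/forall_inP Sw | /forall_inPn [t tS wt]].
    by rewrite big1 // => t _; case: ifP => // /Sw ->.
  by rewrite (bigD1 t) //= tS (negbTE wt) mul0r.
under eq_bigr do rewrite indicator -big_split /=.
rewrite -(bigA_distr_bigA (fun t (b : bool) =>
   (if b then p else 1 - p) * (if t \in S then b%:R else 1))) /=.
rewrite -prodr_const [RHS]big_mkcond; apply: eq_bigr => t _.
by rewrite big_bool /=; case: (t \in S); rewrite ?mulr1 ?mulr0 ?addr0 // addrC subrK.
Qed.

Lemma expect_some_coin_fails_disjoint (A B : {set T}) : [disjoint A & B] ->
  \sum_(w : {ffun T -> bool}) (\prod_t (if w t then p else 1 - p)) *
    (~~ [forall t in A, w t] && ~~ [forall t in B, w t])%:R =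
  (1 - p ^+ #|A|) * (1 - p ^+ #|B|).
Proof.
move=> AB; pose kept_on (S : {set T}) (w : {ffun T -> bool}) := [forall t in S, w t].
have keptU w : kept_on (A :|: B) w = kept_on A w && kept_on B w.
  apply/forall_inP/andP => [AUBw | [/forall_inP Aw /forall_inP Bw] t].
    by split; apply/forall_inP => t tX; apply: AUBw; rewrite inE tX ?orbT.
  by rewrite inE => /orP[/Aw | /Bw].
have kept0 w : kept_on finset.set0 w by apply/forall_inP => t; rewrite inE.
have inclusion_exclusion w : (~~ kept_on A w && ~~ kept_on B w)%:R =
    (kept_on finset.set0 w)%:R - (kept_on A w)%:R - (kept_on B w)%:R
    + (kept_on (A :|: B) w)%:R :> R.
  by rewrite kept0 keptU; case: (kept_on A w); case: (kept_on B w) => /=; ring.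
under eq_bigr do rewrite inclusion_exclusion !mulrDr !mulrN.
rewrite !big_split /= !sumrN !expect_forall_coins cards0.
rewrite cardsU (disjoint_setI0 AB) cards0 subn0 exprD; ring.
Qed.

End IndependentCoins.

Section CellsAndAncestors.
Variables (R : realType) (M n : nat) (p : R).

Definition cell_Vk (k : nat) (c : cell M n) : R :=
  if k == 0%N then (-1) ^+ cell_dim c
  else if cell_dim c == 1%N then (M%:R ^+ n)^-1
  else if cell_dim c == 2%N then - 2 * (M%:R ^+ n)^-1 else 0.

Lemma Vk_cells k (X : pred (cell M n)) : Vk R k X = \sum_c (X c)%:R * cell_Vk k c.
Proof.
rewrite /Vk /cell_Vk; case: eqP => _; rewrite ?/V0 ?/V1 big_mkcond;
  by apply: eq_bigr => c _; case: (X c); rewrite ?mul1r ?mul0r.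
Qed.

Definition ancestor_nodes (S : {set sq M n}) : {set node M n} :=
  [set t : node M n | [exists s in S, t.2 == (anc t.1 s.1, anc t.1 s.2)]].

Definition squares_at (j : 'I_M * 'I_M) (c : cell M n) : {set sq M n} :=
  [set s : sq M n | in_level1 j s && cell_in_sq c s].

Lemma cell_in_C_ancestors w j c :
  cell_in_C w j c = ~~ [forall t in ancestor_nodes (squares_at j c), w t].
Proof.
rewrite /cell_in_C; apply/existsP/idP.
  move=> [s /andP[/andP[js not_kept] cs]]; apply/forall_inP => kept_all.
  move/negP: not_kept; apply; apply/forallP => m.
  by apply: kept_all; rewrite inE; apply/existsP; exists s; rewrite inE js cs /=.
move=> /forall_inPn [t]; rewrite inE => /existsP [s /andP[]].
rewrite inE => /andP[js cs] /eqP t2E wt.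
exists s; rewrite /removed_in js cs /= andbT; apply/forallP => kept_s.
by move/negP: wt; apply; have := kept_s t.1; rewrite -t2E -surjective_pairing.
Qed.

Lemma anc_divn (m : 'I_n) (x : 'I_(M ^ n)) : (anc m x %/ M ^ m = x %/ M ^ n.-1)%N.
Proof.
rewrite /anc /= -divnMA -expnD; congr (_ %/ M ^ _)%N.
by have := ltn_ord m; lia.
Qed.

Lemma disjoint_ancestor_nodes j1 j4 c1 c4 : j1 != j4 ->
  [disjoint ancestor_nodes (squares_at j1 c1) & ancestor_nodes (squares_at j4 c4)].
Proof.
move=> /eqP j14; rewrite -setI_eq0; apply/eqP/setP => t; rewrite !inE.
apply/negP => /andP[/existsP[s /andP[s1 /eqP ts]] /existsP[s' /andP[s4 /eqP ts']]].
move: s1 s4; rewrite !inE /in_level1 => /andP[/andP[/eqP s1x /eqP s1y] _].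
move=> /andP[/andP[/eqP s4x /eqP s4y] _].
move: ts'; rewrite ts => -[ancx ancy].
apply: j14; case: j1 s1x s1y => x1 y1 /= s1x s1y; case: j4 s4x s4y => x4 y4 /= s4x s4y.
congr pair; apply: val_inj => /=; [rewrite -s1x -s4x | rewrite -s1y -s4y].
  by rewrite -!(anc_divn t.1) /= ancx.
by rewrite -!(anc_divn t.1) /= ancy.
Qed.

Lemma EVk_cells k j1 j4 : j1 != j4 -> @EVk R k M n p j1 j4 =
  \sum_c cell_Vk k c * ((1 - p ^+ #|ancestor_nodes (squares_at j1 c)|) *
                         (1 - p ^+ #|ancestor_nodes (squares_at j4 c)|)).
Proof.
move=> j14; rewrite /EVk; under eq_bigr do rewrite Vk_cells mulr_sumr.
rewrite exchange_big; apply: eq_bigr => c _.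
rewrite -expect_some_coin_fails_disjoint ?disjoint_ancestor_nodes // mulr_sumr.
apply: eq_bigr => w _; rewrite /Cint !cell_in_C_ancestors /weight.
by rewrite mulrA mulrC.
Qed.

Lemma card_ancestor_nodes (S : {set sq M n}) : #|ancestor_nodes S| =
  (\sum_(m < n) #|[set (anc m s.1, anc m s.2) | s in S]|)%N.
Proof.
rewrite -sum1_card; under [RHS]eq_bigr do rewrite -sum1_card.
rewrite pair_big_dep /=; apply: eq_bigl => t.
rewrite inE; apply/existsP/imsetP => [[s /andP[sS /eqP ->]] | [s sS ->]].
  by exists s.
by exists s; rewrite sS eqxx.
Qed.

Lemma ancestor_nodes0 : ancestor_nodes finset.set0 = finset.set0.
Proof. by apply/setP => t; rewrite !inE; apply/existsP => -[s]; rewrite inE. Qed.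

Lemma card_ancestor_nodes1 (s : sq M n) : #|ancestor_nodes [set s]| = n.
Proof.
rewrite card_ancestor_nodes; under eq_bigr do rewrite imset_set1 cards1.
by rewrite sum_nat_const card_ord muln1.
Qed.

Lemma card_ancestor_nodes2 (s0 s1 : sq M n) : s0.2 = s1.2 ->
  #|ancestor_nodes [set s0; s1]| = (n + \sum_(m < n) (anc m s0.1 != anc m s1.1))%N.
Proof.
move=> s01; rewrite card_ancestor_nodes.
under eq_bigr do rewrite imsetU1 imset_set1 cards2 xpair_eqE s01 eqxx andbT -add1n.
by rewrite big_split /= sum_nat_const card_ord muln1.
Qed.

End CellsAndAncestors.

Section Transposition.
Variables (R : realType) (M n : nat) (p : R).

Definition transpose_node (t : node M n) : node M n := (t.1, swap_pair t.2).

Lemma transpose_nodeK : involutive transpose_node.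
Proof. by case=> m [x y]. Qed.

Definition transpose_config (w : config M n) : config M n :=
  [ffun t => w (transpose_node t)].

Lemma transpose_configK : involutive transpose_config.
Proof. by move=> w; apply/ffunP => t; rewrite !ffunE transpose_nodeK. Qed.

Lemma weight_transpose w : weight p (transpose_config w) = weight p w.
Proof.
rewrite /weight (reindex_inj (inv_inj transpose_nodeK)) /=.
by apply: eq_bigr => t _; rewrite ffunE transpose_nodeK.
Qed.

Lemma removed_in_transpose w j s :
  removed_in (transpose_config w) (swap_pair j) s = removed_in w j (swap_pair s).
Proof.
rewrite /removed_in /in_level1 /= [X in X && _]andbC; congr (_ && ~~ _).
by apply: eq_forallb => m; rewrite ffunE.
Qed.

Lemma cell_in_sq_swap (c : cell M n) s :
  cell_in_sq (swap_pair c) s = cell_in_sq c (swap_pair s).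
Proof. by rewrite /cell_in_sq /=; apply/idP/idP => /and4P[? ? ? ?]; apply/and4P. Qed.

Lemma cell_in_C_transpose w j c :
  cell_in_C (transpose_config w) (swap_pair j) (swap_pair c) = cell_in_C w j c.
Proof.
rewrite /cell_in_C; apply/existsP/existsP => -[s cs]; exists (swap_pair s).
  by rewrite -removed_in_transpose -cell_in_sq_swap.
by rewrite removed_in_transpose cell_in_sq_swap !swap_pairK.
Qed.

Lemma EVk_transpose k j1 j4 :
  @EVk R k M n p (swap_pair j1) (swap_pair j4) = @EVk R k M n p j1 j4.
Proof.
rewrite /EVk (reindex_inj (inv_inj transpose_configK)) /=.
apply: eq_bigr => w _; rewrite weight_transpose; congr (_ * _).
rewrite !(Vk_cells R) (reindex_inj (can_inj swap_pairK)) /=.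
apply: eq_bigr => c _; rewrite /Cint !cell_in_C_transpose.
by rewrite /cell_Vk /cell_dim /= addnC.
Qed.

Lemma EVkC k j1 j4 : @EVk R k M n p j1 j4 = @EVk R k M n p j4 j1.
Proof.
rewrite /EVk; apply: eq_bigr => w _; rewrite !(Vk_cells R); congr (_ * _).
by apply: eq_bigr => c _; rewrite /Cint andbC.
Qed.

End Transposition.

Lemma adjacent_sides_stacked (R : realType) (M : nat) (p : R) (j1 j4 : 'I_M * 'I_M) :
  adjacent_sides j1 j4 -> exists i1 i4 : 'I_M * 'I_M,
    [/\ i4.1 = i1.1, (i4.2 : nat) = i1.2.+1 &
        forall k n, @EVk R k M n p j1 j4 = @EVk R k M n p i1 i4].
Proof.
case/orP => /andP[/eqP e /orP[] /eqP e'].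
- by exists j1, j4.
- by exists j4, j1; split => // k n; rewrite EVkC.
- by exists (swap_pair j1), (swap_pair j4); split => //= k n; rewrite EVk_transpose.
- by exists (swap_pair j4), (swap_pair j1); split => //= k n; rewrite EVk_transpose EVkC.
Qed.

Lemma sum_ord_even_odd (V : nmodType) (g : nat -> V) (K : nat) :
  \sum_(t < (2 * K).+1) g t = \sum_(i < K.+1) g (2 * i)%N + \sum_(i < K) g (2 * i).+1.
Proof.
elim: K => [|K IH]; first by rewrite !big_ord1 big_ord0 addr0.
rewrite mulnS -[(2 + 2 * K)%N]/((2 * K).+2).
rewrite big_ord_recr [in LHS]big_ord_recr IH /=.
rewrite [\sum_(i < K.+2) _]big_ord_recr [\sum_(i < K.+1) g (2 * i).+1]big_ord_recr /=.
by rewrite mulnS [RHS]addrACA -addrA [g _ + g _]addrC addrA.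
Qed.

(* The indicators [d ^ e %| i] are nonincreasing in [e], so the power telescopes. *)
Lemma expr_sum_dvdn_exp (R : comPzRingType) (q : R) (d i N : nat) :
  q ^+ (\sum_(e < N) (d ^ e %| i))%N =
  1 + \sum_(e < N) (d ^ e %| i)%N%:R * (q ^+ e.+1 - q ^+ e).
Proof.
elim: N => [|N IH]; first by rewrite !big_ord0 expr0 addr0.
rewrite !big_ord_recr /=; case: (boolP (d ^ N %| i)%N) => [dNi | _]; last first.
  by rewrite addn0 IH mul0r addr0.
have de_i (e : 'I_N) : (d ^ e %| i)%N.
  by apply: dvdn_trans dNi; apply: dvdn_exp2l; exact: ltnW (ltn_ord e).
under eq_bigr do rewrite de_i.
under [in RHS]eq_bigr do rewrite de_i mul1r.
rewrite sum_nat_const card_ord muln1.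
rewrite -(big_mkord xpredT (fun e => q ^+ e.+1 - q ^+ e)) telescope_sumr //.
by rewrite addn1 mul1r expr0; ring.
Qed.

Lemma divn_pred_neq (x d : nat) : (0 < d)%N -> (0 < x)%N ->
  (x.-1 %/ d != x %/ d)%N = (d %| x)%N.
Proof.
case: x => // y d_gt0 _; rewrite divnS //=.
by case: (d %| y.+1)%N; rewrite ?add0n ?eqxx // add1n neq_ltn ltnSn.
Qed.

Lemma sum_dvdn_mul (c d : nat) : (0 < d)%N ->
  (\sum_(0 <= i < c * d) (d %| i))%N = c.
Proof.
move=> d_gt0; elim: c => [|c IH]; first by rewrite mul0n big_geq.
rewrite mulSnr (@big_cat_nat _ _ _ (c * d)) //= ?leq_addr // IH.
rewrite -{1}(add0n (c * d)%N) big_addn addKn.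
under eq_bigr do rewrite dvdn_addl ?dvdn_mull //.
rewrite big_ltn // dvdn0 big1_seq ?addn0 ?addn1 // => i /andP[_].
rewrite mem_index_iota => /andP[i_gt0 i_lt].
by case: (boolP (d %| i)%N) => // /(dvdn_leq i_gt0); lia.
Qed.

Lemma sum_dvdn_exp (M n e : nat) : (0 < M)%N -> (e < n)%N ->
  (\sum_(1 <= i < M ^ n.-1) (M ^ e %| i))%N = (M ^ (n.-1 - e) - 1)%N.
Proof.
move=> M_gt0 e_lt.
have Mn : (M ^ n.-1 = M ^ (n.-1 - e) * M ^ e)%N by rewrite -expnD subnK //; lia.
have Me_gt0 : (0 < M ^ e)%N by rewrite expn_gt0 M_gt0.
have := sum_dvdn_mul (M ^ (n.-1 - e)) Me_gt0.
by rewrite -Mn big_ltn ?expn_gt0 ?M_gt0 // dvdn0; lia.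
Qed.

Lemma sum_expr_sum_dvdn_exp (R : fieldType) (M n : nat) (q : R) :
  (0 < M)%N -> (0 < n)%N -> q != M%:R ->
  \sum_(1 <= i < M ^ n.-1) q ^+ (\sum_(e < n) (M ^ e %| i))%N =
  ((M ^ n.-1)%:R - 1) + (q - 1) * ((M%:R ^+ n - q ^+ n) / (M%:R - q)) - (q ^+ n - 1).
Proof.
move=> M_gt0 n_gt0 qM.
under eq_bigr do rewrite expr_sum_dvdn_exp.
rewrite big_split /= sumr_const_nat exchange_big /=.
under eq_bigr => e _ do rewrite -mulr_suml -natr_sum (sum_dvdn_exp M_gt0 (ltn_ord e)).
under eq_bigr => e _ do rewrite natrB ?expn_gt0 ?M_gt0 // natrX.
have -> : \sum_(e < n) ((M%:R ^+ (n.-1 - e) - 1) * (q ^+ e.+1 - q ^+ e)) =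
    (q - 1) * \sum_(e < n) (M%:R ^+ (n.-1 - e) * q ^+ e)
    - \sum_(e < n) (q ^+ e.+1 - q ^+ e).
  by rewrite mulr_sumr -sumrB; apply: eq_bigr => e _; rewrite exprS; ring.
have Mq : M%:R - q != 0 by rewrite subr_eq0 eq_sym.
rewrite -(big_mkord xpredT (fun e => q ^+ e.+1 - q ^+ e)) telescope_sumr // expr0.
rewrite subrXX [(_ - q) * _]mulrC mulfK //.
by rewrite natrB ?expn_gt0 ?M_gt0 // addrA.
Qed.

(** * The common side of two stacked level-1 squares *)

Section CommonSide.
Variables (R : realType) (M n : nat) (p : R) (j1 j4 : 'I_M * 'I_M).
Hypotheses (n_gt0 : (0 < n)%N) (j4x : j4.1 = j1.1) (j4y : (j4.2 : nat) = j1.2.+1).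

(* In level-n units, J_1 is the square [a K, a K + K] x [b K, b K + K] and
   J_4 lies on top of it.  In doubled coordinates the cells of the common side
   are [side_cell t], t <= 2 K; [row_squares Y t] are the level-n squares of
   row Y, inside the column of J_1, that contain the abscissa of
   [side_cell t]. *)
Let K := (M ^ n.-1)%N.
Let a := (j1.1 : nat).
Let b := (j1.2 : nat).

Let M_gt0 : (0 < M)%N. Proof. exact: leq_ltn_trans (leq0n _) (ltn_ord j1.1). Qed.
Let K_gt0 : (0 < K)%N. Proof. by rewrite expn_gt0 M_gt0. Qed.
Let expnK : (M ^ n = M * K)%N. Proof. by rewrite -expnS prednK. Qed.

Let a_bound : (a * K + K <= M ^ n)%N.
Proof. by rewrite expnK -mulSnr leq_mul2r ltn_ord orbT. Qed.

Let b_bound : (b * K + K + K <= M ^ n)%N.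
Proof.
rewrite expnK -!mulSnr leq_mul2r; apply/orP; right.
by have := ltn_ord j4.2; rewrite j4y.
Qed.

Let divn_eqE x y : ((x %/ K)%N == y) = (y * K <= x < y * K + K)%N.
Proof. by rewrite eqn_leq -ltnS ltn_divLR // leq_divRL // mulSn; lia. Qed.

Definition side_cell (t : nat) : cell M n :=
  (inord (2 * (a * K) + t), inord (2 * (b * K + K))).

Definition row_squares (Y t : nat) : {set sq M n} :=
  [set s : sq M n | [&& (s.2 : nat) == Y, (a * K <= s.1)%N, (s.1 < a * K + K)%N,
     (2 * s.1 <= 2 * (a * K) + t)%N & (2 * (a * K) + t <= 2 * s.1 + 2)%N]].

Definition vertex_count (i : nat) : nat :=
  if (0 < i < K)%N then (n + \sum_(e < n) (M ^ e %| i))%N else n.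

Lemma side_cell1 t : (t <= 2 * K)%N -> ((side_cell t).1 : nat) = (2 * (a * K) + t)%N.
Proof. by move=> t_le; rewrite /= inordK //; lia. Qed.

Lemma side_cell2 t : ((side_cell t).2 : nat) = (2 * (b * K + K))%N.
Proof. by rewrite /= inordK //; lia. Qed.

Lemma squares_at_side_cell1 t : (t <= 2 * K)%N ->
  squares_at j1 (side_cell t) = row_squares (b * K + K - 1) t.
Proof.
move=> t_le; apply/setP => s; rewrite !inE /in_level1 /cell_in_sq.
by rewrite side_cell1 // side_cell2 !divn_eqE -/a -/b; lia.
Qed.

Lemma squares_at_side_cell4 t : (t <= 2 * K)%N ->
  squares_at j4 (side_cell t) = row_squares (b * K + K) t.
Proof.
move=> t_le; apply/setP => s; rewrite !inE /in_level1 /cell_in_sq.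
by rewrite side_cell1 // side_cell2 !divn_eqE j4x j4y -/a -/b mulSn; lia.
Qed.

Let row_square x Y : (x < M ^ n)%N -> (Y < M ^ n)%N ->
  exists s : sq M n, (s.1 : nat) = x /\ (s.2 : nat) = Y.
Proof. by move=> x_lt Y_lt; exists (Ordinal x_lt, Ordinal Y_lt). Qed.

Lemma card_row_squares_single Y t x : (x < M ^ n)%N -> (Y < M ^ n)%N ->
  (forall s : sq M n,
     (s \in row_squares Y t) = ((s.1 : nat) == x) && ((s.2 : nat) == Y)) ->
  #|ancestor_nodes (row_squares Y t)| = n.
Proof.
move=> x_lt Y_lt rowE; have [s0 [s0x s0Y]] := row_square x_lt Y_lt.
suff -> : row_squares Y t = [set s0] by exact: card_ancestor_nodes1.
by apply/setP => s; rewrite rowE inE -pair_eqE /= -!val_eqE /= s0x s0Y.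
Qed.

Lemma card_row_squares_edge Y i : (Y < M ^ n)%N -> (i < K)%N ->
  #|ancestor_nodes (row_squares Y (2 * i).+1)| = n.
Proof.
move=> Y_lt i_lt; apply: (@card_row_squares_single _ _ (a * K + i)) => //; first lia.
by move=> s; rewrite inE; lia.
Qed.

Lemma card_row_squares_interior Y i : (Y < M ^ n)%N -> (0 < i < K)%N ->
  #|ancestor_nodes (row_squares Y (2 * i))| = (n + \sum_(e < n) (M ^ e %| i))%N.
Proof.
move=> Y_lt i_range.
have [s0 [s0x s0Y]] := @row_square (a * K + i - 1) Y ltac:(lia) Y_lt.
have [s1 [s1x s1Y]] := @row_square (a * K + i) Y ltac:(lia) Y_lt.
have -> : row_squares Y (2 * i) = [set s0; s1].
  by apply/setP => s; rewrite !inE -!pair_eqE /= -!val_eqE /= s0x s0Y s1x s1Y; lia.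
rewrite card_ancestor_nodes2; last by apply: val_inj; rewrite /= s0Y s1Y.
congr (_ + _)%N; rewrite (reindex_inj rev_ord_inj) /=; apply: eq_bigr => m _.
rewrite -val_eqE /= (_ : (n - (n - m.+1).+1)%N = m); last by have := ltn_ord m; lia.
rewrite s0x s1x subn1 divn_pred_neq ?expn_gt0 ?M_gt0 //; last lia.
by rewrite dvdn_addr // dvdn_mull // dvdn_exp2l //; have := ltn_ord m; lia.
Qed.

Lemma card_row_squares_vertex Y i : (Y < M ^ n)%N -> (i <= K)%N ->
  #|ancestor_nodes (row_squares Y (2 * i))| = vertex_count i.
Proof.
move=> Y_lt i_le; rewrite /vertex_count; case: ifP => [|/negbT i_end].
  exact: card_row_squares_interior.
have [-> | i_gt0] := posnP i.
  apply: (@card_row_squares_single _ _ (a * K)) => //; first lia.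
  by move=> s; rewrite inE; lia.
have -> : i = K by move: i_end; rewrite i_gt0 /= -leqNgt; lia.
apply: (@card_row_squares_single _ _ (a * K + K - 1)) => //; first lia.
by move=> s; rewrite inE; lia.
Qed.

Lemma side_cellP c : squares_at j1 c != finset.set0 -> squares_at j4 c != finset.set0 ->
  exists2 t, (t <= 2 * K)%N & c = side_cell t.
Proof.
move=> /set0Pn [s]; rewrite inE /in_level1 /cell_in_sq !divn_eqE -/a -/b => s1.
move=> /set0Pn [s']; rewrite inE /in_level1 /cell_in_sq !divn_eqE j4x j4y mulSn -/a -/b.
move=> s4.
exists (c.1 - 2 * (a * K))%N; first lia.
rewrite [c]surjective_pairing /side_cell.
by congr pair; apply: val_inj; rewrite /= inordK; lia.
Qed.

Lemma side_cell_inj : injective (fun t : 'I_(2 * K).+1 => side_cell t).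
Proof.
move=> t t' /(congr1 (fun c : cell M n => (c.1 : nat))).
by rewrite (side_cell1 (ltn_ord t)) (side_cell1 (ltn_ord t')) => /addnI /val_inj.
Qed.

Lemma sum_cells_side (F : cell M n -> R) :
  (forall c, squares_at j1 c = finset.set0 \/ squares_at j4 c = finset.set0 -> F c = 0) ->
  \sum_c F c = \sum_(t < (2 * K).+1) F (side_cell t).
Proof.
move=> F0; rewrite (bigID (mem [set side_cell t | t : 'I_(2 * K).+1])) /=.
rewrite [X in _ + X]big1 ?addr0 => [|c c_off]; last first.
  apply: F0; case: (eqVneq (squares_at j1 c) finset.set0) => [|c1]; first by left.
  case: (eqVneq (squares_at j4 c) finset.set0) => [|c4]; first by right.
  have [t t_le cE] := side_cellP c1 c4.
  by move/imsetP: c_off; case; exists (Ordinal (t_le : (t < (2 * K).+1)%N)).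
rewrite (big_imset _ (in2W side_cell_inj)) /=; exact: eq_bigl.
Qed.

Lemma cell_dim_side_cell t : (t <= 2 * K)%N -> cell_dim (side_cell t) = odd t.
Proof.
by move=> t_le; rewrite /cell_dim side_cell1 // side_cell2 !mul2n oddD !odd_double addn0.
Qed.

Let Y1_lt : (b * K + K - 1 < M ^ n)%N. Proof. lia. Qed.
Let Y4_lt : (b * K + K < M ^ n)%N. Proof. lia. Qed.

Lemma EVk_common_side k : @EVk R k M n p j1 j4 =
  \sum_(i < K.+1) cell_Vk R k (side_cell (2 * i)) * (1 - p ^+ vertex_count i) ^+ 2 +
  \sum_(i < K) cell_Vk R k (side_cell (2 * i).+1) * (1 - p ^+ n) ^+ 2.
Proof.
have j14 : j1 != j4 by apply/negP => /eqP j14; move: j4y; rewrite -j14; lia.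
rewrite EVk_cells // sum_cells_side => [|c [] ->]; last first.
- by rewrite ancestor_nodes0 cards0 expr0 subrr ?mul0r ?mulr0.
- by rewrite ancestor_nodes0 cards0 expr0 subrr ?mul0r ?mulr0.
rewrite (sum_ord_even_odd (fun t => cell_Vk R k (side_cell t) *
  ((1 - p ^+ #|ancestor_nodes (squares_at j1 (side_cell t))|) *
   (1 - p ^+ #|ancestor_nodes (squares_at j4 (side_cell t))|)))).
congr (_ + _); apply: eq_bigr => i _; have := ltn_ord i => i_lt.
  rewrite squares_at_side_cell1 ?squares_at_side_cell4 ?leq_mul2l //.
  by rewrite !card_row_squares_vertex // -expr2.
rewrite squares_at_side_cell1 ?squares_at_side_cell4; try lia.
by rewrite !card_row_squares_edge // -expr2.
Qed.

Lemma EV1_common_side : @EVk R 1 M n p j1 j4 = (1 - p ^+ n) ^+ 2 / M%:R.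
Proof.
rewrite EVk_common_side big1 ?add0r => [|i _]; last first.
  have i_le : (2 * i <= 2 * K)%N by have := ltn_ord i; lia.
  by rewrite /cell_Vk cell_dim_side_cell // mul2n odd_double mul0r.
have edge_Vk (i : 'I_K) : cell_Vk R 1 (side_cell (2 * i).+1) = (M%:R ^+ n)^-1.
  have i_le : ((2 * i).+1 <= 2 * K)%N by have := ltn_ord i; lia.
  by rewrite /cell_Vk cell_dim_side_cell //= mul2n odd_double.
under eq_bigr do rewrite edge_Vk.
rewrite sumr_const card_ord -[_ *+ K]mulr_natl -natrX expnK natrM.
by field; rewrite !pnatr_eq0 -!lt0n M_gt0 K_gt0.
Qed.

Lemma EV0_common_side : p != M%:R -> p ^+ 2 != M%:R -> @EVk R 0 M n p j1 j4 =
  1 - 4 * p ^+ n + (4 - 2 * (1 - p) / (M%:R - p)) * p ^+ (2 * n)%N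
  - (1 - (1 - p ^+ 2) / (M%:R - p ^+ 2)) * p ^+ (4 * n)%N
  + 2 * (1 - p) / (M%:R - p) * (M%:R * p) ^+ n
  - (1 - p ^+ 2) / (M%:R - p ^+ 2) * (M%:R * p ^+ 2) ^+ n.
Proof.
move=> pM p2M; rewrite EVk_common_side.
have vertex_Vk (i : 'I_K.+1) : cell_Vk R 0 (side_cell (2 * i)) = 1.
  have i_le : (2 * i <= 2 * K)%N by rewrite leq_mul2l -ltnS ltn_ord orbT.
  by rewrite /cell_Vk cell_dim_side_cell // mul2n odd_double.
have edge_Vk (i : 'I_K) : cell_Vk R 0 (side_cell (2 * i).+1) = -1.
  have i_le : ((2 * i).+1 <= 2 * K)%N by have := ltn_ord i; lia.
  by rewrite /cell_Vk cell_dim_side_cell //= mul2n odd_double.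
under eq_bigr do rewrite vertex_Vk mul1r.
under [X in _ + X]eq_bigr do rewrite edge_Vk mulN1r.
rewrite sumrN sumr_const card_ord.
have vertices : \sum_(i < K.+1) (1 - p ^+ vertex_count i) ^+ 2 = 2 * (1 - p ^+ n) ^+ 2 +
    \sum_(1 <= i < K) (1 - p ^+ n * p ^+ (\sum_(e < n) (M ^ e %| i))%N) ^+ 2.
  rewrite -(big_mkord xpredT (fun i => (1 - p ^+ vertex_count i) ^+ 2)).
  rewrite big_nat_recr //= big_ltn //= /vertex_count !ltnn andbF /=.
  rewrite addrAC -mulr2n [in RHS]mulr_natl; congr (_ + _).
  by apply: eq_big_nat => i i_range; rewrite i_range exprD.
have expand (c : nat) : (1 - p ^+ n * p ^+ c) ^+ 2 =
    1 - 2 * p ^+ n * p ^+ c + (p ^+ n) ^+ 2 * (p ^+ 2) ^+ c.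
  by rewrite [(p ^+ 2) ^+ c]exprAC; ring.
rewrite vertices; under eq_bigr do rewrite expand.
rewrite big_split sumrB /= sumr_const_nat -!mulr_sumr !sum_expr_sum_dvdn_exp //.
rewrite natrB // -natrX expnK natrM ![(p ^+ 2) ^+ n]exprAC mulnC exprM.
rewrite (mulnC 4%N) exprM !exprMn -[(1 - _) ^+ 2 *+ K]mulr_natl -natrX expnK natrM.
have Mp : M%:R - p != 0 by rewrite subr_eq0 eq_sym.
have Mp2 : M%:R - p ^+ 2 != 0 by rewrite subr_eq0 eq_sym.
by move: (K%:R : R) (p ^+ n) => k P; field; rewrite Mp Mp2.
Qed.

End CommonSide.

(** * Summation of the series *)

Section GeometricTails.
Variable R : archiRealFieldType.
Local Open Scope classical_set_scope.

Lemma cvg_geometric_tail (x : R) : `|x| < 1 ->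
  (fun N => \sum_(1 <= n < N) x ^+ n) @ \oo --> x / (1 - x).
Proof.
move=> x_lt1; rewrite -cvg_shiftS /=.
under eq_fun => N do rewrite -[N.+1]add1n geometric_partial_tail expr1.
exact: cvg_geometric_series.
Qed.

Lemma cvg_sum_geometric_tails (s : seq (R * R)) :
  all (fun cx => `|cx.2| < 1) s ->
  (fun N => \sum_(1 <= n < N) \sum_(cx <- s) cx.1 * cx.2 ^+ n) @ \oo -->
    \sum_(cx <- s) cx.1 * (cx.2 / (1 - cx.2)).
Proof.
move=> /allP s_lt1.
under eq_fun do rewrite exchange_big /= big_seq.
rewrite big_seq; apply: cvg_big => [|[c x] /s_lt1 /= x_lt1]; first exact: add_continuous.
under eq_fun do rewrite -mulr_sumr.
by apply: cvgMl_tmp; exact: cvg_geometric_tail.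
Qed.

End GeometricTails.

Section Limits.
Variable R : realType.
Local Open Scope classical_set_scope.

Lemma powR_dimD (M n k : nat) (p : R) : (1 < M)%N -> 0 < p ->
  (M%:R^-1) `^ (n%:R * (dimD M p - k%:R)) = (M%:R ^+ k / (M%:R ^+ 2 * p)) ^+ n.
Proof.
move=> M_gt1 p_gt0.
have M_gt0 : (0 : R) < M%:R by rewrite ltr0n; lia.
have lnM_neq0 : ln (M%:R : R) != 0 by rewrite gt_eqF // ln_gt0 // ltr1n.
have q_gt0 : 0 < M%:R ^+ k / (M%:R ^+ 2 * p) by rewrite divr_gt0 ?mulr_gt0 ?exprn_gt0.
rewrite /powR invr_eq0 gt_eqF //= lnV ?posrE // -[RHS]lnK ?posrE ?exprn_gt0 //.
congr expR; rewrite lnXn // ln_div ?posrE ?mulr_gt0 ?exprn_gt0 // lnXn // /dimD.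
by field.
Qed.

Lemma cvg_E1_partial k M (p : R) j1 j4 (s : seq (R * R)) :
  all (fun cx => `|cx.2| < 1) s ->
  (forall n, (0 < n)%N ->
    (M%:R^-1) `^ (n%:R * (dimD M p - k%:R)) * @EVk R k M n p j1 j4 =
    \sum_(cx <- s) cx.1 * cx.2 ^+ n) ->
  @E1_partial R k M p j1 j4 @ \oo -->
    2 * M%:R * (M%:R - 1) * \sum_(cx <- s) cx.1 * (cx.2 / (1 - cx.2)).
Proof.
move=> s_lt1 termE.
have -> : @E1_partial R k M p j1 j4 =
    fun N => 2 * M%:R * (M%:R - 1) * \sum_(1 <= n < N) \sum_(cx <- s) cx.1 * cx.2 ^+ n.
  by apply: funext => N; congr (_ * _); apply: eq_big_nat => n /andP[/termE].
by apply: cvgMl_tmp; exact: cvg_sum_geometric_tails.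
Qed.

End Limits.

Section AdjacentLimits.
Variables (R : realType) (M : nat) (p : R) (j1 j4 : 'I_M * 'I_M).
Hypotheses (M_gt1 : (1 < M)%N) (p_le1 : p <= 1)
  (j4x : j4.1 = j1.1) (j4y : (j4.2 : nat) = j1.2.+1).
Local Open Scope classical_set_scope.

Local Notation m := (M%:R : R).
Let m_gt1 : 1 < m. Proof. by rewrite ltr1n. Qed.

Let norm_div_lt1 (x y : R) : 0 <= x -> x < y -> `|x / y| < 1.
Proof.
move=> x_ge0 xy; rewrite ger0_norm ?divr_ge0 ?(ltW (le_lt_trans x_ge0 xy)) //.
by rewrite ltr_pdivrMr ?mul1r // (le_lt_trans x_ge0 xy).
Qed.

Lemma E1_partial1_cvg : m^-1 < p ->
  @E1_partial R 1%N M p j1 j4 @ \oo -->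
    2 * (m - 1) * ((m * p - 1)^-1 - 2 / (m - 1) + p / (m - p)).
Proof.
move=> p_gt; have m1 := m_gt1.
have m_gt0 : 0 < m by lra.
have pm : p < m := le_lt_trans p_le1 m1.
have p_gt0 : 0 < p by apply: lt_trans p_gt; rewrite invr_gt0.
have mp_gt1 : 1 < m * p by rewrite -ltr_pdivrMl // mulr1.
pose s := [:: (m^-1, 1 / (m * p)); (- 2 / m, 1 / m); (m^-1, p / m)].
set L := (X in _ --> X).
have -> : L = 2 * m * (m - 1) * \sum_(cx <- s) cx.1 * (cx.2 / (1 - cx.2)).
  rewrite /L !big_cons big_nil /=; field.
  by rewrite !(gt_eqF, lt0r_neq0, subr_gt0, mulr_gt0) ?pm ?m_gt0.
apply: cvg_E1_partial => [|n n_gt0].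
  by rewrite /= !norm_div_lt1 //; lra.
rewrite powR_dimD // EV1_common_side // !big_cons big_nil /=.
rewrite !expr_div_n !exprMn !expr1n expr1.
have mn : m ^+ n != 0 by rewrite expf_neq0 // gt_eqF.
have pn : p ^+ n != 0 by rewrite expf_neq0 // gt_eqF.
by move: (m ^+ n) (p ^+ n) mn pn => mn P mn0 P0; field; rewrite mn0 P0 gt_eqF.
Qed.

Lemma E1_partial0_cvg : (m ^+ 2)^-1 < p ->
  @E1_partial R 0%N M p j1 j4 @ \oo -->
    (2 * m * (m - 1) / (m - p) *
       (2 * (1 - p) / (m - 1) + 2 * (m - 1) * p / (m ^+ 2 - p)
        - p * (1 - p ^+ 2) / (m - p ^+ 2))
     - 2 * m * (m - 1) ^+ 2 * p ^+ 3 / ((m - p ^+ 2) * (m ^+ 2 - p ^+ 3))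
     + 2 * m * (m - 1) / (m ^+ 2 * p - 1)
     - 8 * m / (m + 1)
     + 4 * m * (m - 1) * p / (m ^+ 2 - p) : R).
Proof.
move=> p_gt; have m1 := m_gt1.
have m_gt0 : 0 < m by lra.
have m2_gt1 : 1 < m ^+ 2 by rewrite expr_gt1 // m1.
have p_gt0 : 0 < p by apply: lt_trans p_gt; rewrite invr_gt0 exprn_gt0.
have m2p_gt1 : 1 < m ^+ 2 * p by rewrite -ltr_pdivrMl ?exprn_gt0 // mulr1.
have pm : p < m := le_lt_trans p_le1 m1.
have p2m : p ^+ 2 < m := le_lt_trans (exprn_ile1 _ (ltW p_gt0) p_le1) m1.
have pm2 : p < m ^+ 2 := le_lt_trans p_le1 m2_gt1.
have p3m2 : p ^+ 3 < m ^+ 2 := le_lt_trans (exprn_ile1 _ (ltW p_gt0) p_le1) m2_gt1.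
pose s := [:: (1, 1 / (m ^+ 2 * p)); (-4, 1 / m ^+ 2);
  (4 - 2 * (1 - p) / (m - p), p / m ^+ 2);
  (- (1 - (1 - p ^+ 2) / (m - p ^+ 2)), p ^+ 3 / m ^+ 2);
  (2 * (1 - p) / (m - p), 1 / m); (- ((1 - p ^+ 2) / (m - p ^+ 2)), p / m)].
set L := (X in _ --> X).
have -> : L = 2 * m * (m - 1) * \sum_(cx <- s) cx.1 * (cx.2 / (1 - cx.2)).
  rewrite /L !big_cons big_nil /=; field.
  by rewrite !(gt_eqF, lt0r_neq0, subr_gt0, addr_gt0, mulr_gt0, exprn_gt0).
apply: cvg_E1_partial => [|n n_gt0].
  by rewrite /= !norm_div_lt1 ?exprn_ge0 //; lra.
rewrite powR_dimD // EV0_common_side ?lt_eqF // !big_cons big_nil /= expr0.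
rewrite !expr_div_n !expr1n !exprMn (mulnC 2%N) (mulnC 4%N) !exprM.
have mn : m ^+ n != 0 by rewrite expf_neq0 // gt_eqF.
have pn : p ^+ n != 0 by rewrite expf_neq0 // gt_eqF.
have mp : m - p != 0 by rewrite subr_eq0 gt_eqF.
have mp2 : m - p ^+ 2 != 0 by rewrite subr_eq0 gt_eqF.
by move: (m ^+ n) (p ^+ n) mn pn => mn P mn0 P0; field; rewrite mn0 P0 mp mp2.
Qed.

End AdjacentLimits.

Local Open Scope classical_set_scope.

Theorem corollary5p12 (R : realType) (M : nat) (p : R) (j1 j4 : 'I_M * 'I_M) :
  (2 <= M)%N -> 0 <= p <= 1 -> adjacent_sides j1 j4 ->
  ((M%:R ^+ 2)^-1 < p ->
    @E1_partial R 0%N M p j1 j4 @ \oo -->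
      (2 * M%:R * (M%:R - 1) / (M%:R - p) *
         (2 * (1 - p) / (M%:R - 1) + 2 * (M%:R - 1) * p / (M%:R ^+ 2 - p)
          - p * (1 - p ^+ 2) / (M%:R - p ^+ 2))
       - 2 * M%:R * (M%:R - 1) ^+ 2 * p ^+ 3
           / ((M%:R - p ^+ 2) * (M%:R ^+ 2 - p ^+ 3))
       + 2 * M%:R * (M%:R - 1) / (M%:R ^+ 2 * p - 1)
       - 8 * M%:R / (M%:R + 1)
       + 4 * M%:R * (M%:R - 1) * p / (M%:R ^+ 2 - p) : R)) /\
  (M%:R^-1 < p ->
    @E1_partial R 1%N M p j1 j4 @ \oo -->
      (2 * (M%:R - 1) *
         ((M%:R * p - 1)^-1 - 2 / (M%:R - 1) + p / (M%:R - p)) : R)).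
Proof.
move=> M_gt1 /andP[_ p_le1] /(adjacent_sides_stacked p) [i1 [i4 [i4x i4y EVkE]]].
have E1E k : @E1_partial R k M p j1 j4 = @E1_partial R k M p i1 i4.
  by apply: funext => N; rewrite /E1_partial; under eq_bigr do rewrite EVkE.
rewrite !E1E; split.
- exact: E1_partial0_cvg M_gt1 p_le1 i4x i4y.
- exact: E1_partial1_cvg M_gt1 p_le1 i4x i4y.
Qed.
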